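(* Let $N$ be a positive integer and, for $t>-\log N$, let $\theta(t,N)=\lim_{n\to\infty}\Big(\int_N^n\frac{dx}{t+\log x}-\sum_{j=N}^{n-1}\frac{1}{H_j-\gamma+t}\Big)$. Then $t\mapsto\theta(t,N)$ is strictly totally monotone on $(-\log N,\infty)$, and for every nonnegative integer $k$ and every $t>-\log N$, $$(-1)^k\frac{d^k}{dt^k}\theta(t,N)=k!\lim_{n\to\infty}\Big(\int_N^n\frac{dx}{(t+\log x)^{k+1}}-\sum_{j=N}^{n-1}\frac{1}{(H_j-\gamma+t)^{k+1}}\Big)>0.$$
   Context: $\gamma$ is the Euler–Mascheroni constant and $H_j=\sum_{i=1}^j1/i$. A real function $f$ on an interval $I$ is strictly totally monotone on $I$ if it is continuous on $I$, infinitely differentiable on the interior of $I$, and $(-1)^kf^{(k)}(x)>0$ for all $x$ in the interior of $I$ and all integers $k\ge0$. *)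

From Stdlib Require Import Reals Lra Lia List ClassicalEpsilon.
Import ListNotations.
Open Scope R_scope.

Definition harm (j : nat) : R :=
  fold_right Rplus 0 (map (fun i => / INR i) (seq 1 j)).

(* Finite sum  sum_{j=N}^{n-1} f j  (empty if n <= N). *)
Definition ssum (f : nat -> R) (N n : nat) : R :=
  fold_right Rplus 0 (map f (seq N (n - N))).

(* Riemann integral int_a^b f, as a total function: the Stdlib RiemannInt
   when f is Riemann integrable on [a,b] (the value does not depend on the
   integrability proof), and 0 otherwise (never used below: the integrands
   are continuous on the relevant intervals). *)
Definition RInt (f : R -> R) (a b : R) : R :=
  match excluded_middle_informative (inhabited (Riemann_integrable f a b)) with
  | left h => RiemannInt (epsilon h (fun _ => True))
  | right _ => 0
  end.

(* The n-th term of the sequence whose limit (n -> oo) defines, for k = 0,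
   theta(t,N), and in general the limit appearing in the k-th derivative:
   int_N^n dx/(t+log x)^(k+1) - sum_{j=N}^{n-1} 1/(H_j - gamma + t)^(k+1). *)
Definition theta_term (gamma : R) (k : nat) (t : R) (N n : nat) : R :=
  RInt (fun x => / (t + ln x) ^ (S k)) (INR N) (INR n)
  - ssum (fun j => / (harm j - gamma + t) ^ (S k)) N n.

From Pilot Require Import Defs.
From Stdlib Require Import Reals Arith Lra Lia List ClassicalEpsilon FunctionalExtensionality.
From Coquelicot Require Import Coquelicot.
Open Scope R_scope.

(** Let [rho] be nonincreasing on [[ln N, oo)] and [ln j <= a_j <= ln (j + 1)].  Then the
    gap [int_N^n rho (ln x) dx - sum_(j=N)^(n-1) rho (a_j)] changes from [n] to [m] by at most
    [rho (ln n) - rho (ln m)], since each unit step of integral and summand lies between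
    [rho (ln (j + 1))] and [rho (ln j)].  The bounds [ln (j + 1/2) < H_j - gamma <= ln (j + 1)]
    (monotonicity of [H_n - ln (n + c)] for [c = 1/2, 1]) make [a_j = H_j - gamma] admissible.
    - With [rho c = (t + c)^-(k+1)] the gap is Cauchy, so the k-th limit [theta_k t] exists; it
      is positive because [x |-> (t + ln x)^-(k+1)] is convex, so each unit integral exceeds its
      midpoint value, which in turn exceeds [rho (H_j - gamma)] as [H_j - gamma > ln (j + 1/2)].
    - With [rho] the Taylor remainder [f (t + c + h) - f (t + c) - h f' (t + c)] of
      [f s = s^-(k+1)], which is nonincreasing in [c] and lies in [[0, C h^2]], the gap yields
      [|theta_k (t + h) - theta_k t + h (k + 1) theta_(k+1) t| <= C h^2].  Hence
      [theta_k' = -(k + 1) theta_(k+1)], and [(-1)^k k! theta_k] is the k-th derivative. *)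

Lemma fold_right_Rplus_init (l : list R) (s : R) :
  fold_right Rplus s l = fold_right Rplus 0 l + s.
Proof. induction l as [|x l IH]; simpl; [ring | rewrite IH; ring]. Qed.

Lemma harm_S n : harm (S n) = harm n + / INR (S n).
Proof.
  unfold harm. rewrite seq_S, map_app, fold_right_app; simpl.
  rewrite fold_right_Rplus_init. replace (1 + n)%nat with (S n) by lia. ring.
Qed.

Lemma ssum_nil f N : ssum f N N = 0.
Proof. unfold ssum. now rewrite Nat.sub_diag. Qed.

Lemma ssum_S f N n : (N <= n)%nat -> ssum f N (S n) = ssum f N n + f n.
Proof.
  intro Hn. unfold ssum. replace (S n - N)%nat with (S (n - N)) by lia.
  rewrite seq_S, map_app, fold_right_app; simpl.
  rewrite fold_right_Rplus_init. replace (N + (n - N))%nat with n by lia. ring.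
Qed.

Lemma ssum_sub_add_scal (f g h : nat -> R) c N n :
  ssum (fun j => f j - g j + c * h j) N n = ssum f N n - ssum g N n + c * ssum h N n.
Proof.
  unfold ssum. induction (seq N (n - N)) as [|j l IH]; simpl; [ring | rewrite IH; ring].
Qed.

Lemma ln_1p_le x : 0 < x -> ln (1 + x) <= x.
Proof.
  intro Hx. rewrite <- (ln_exp x) at 2.
  apply Rlt_le, ln_increasing; [lra | apply exp_ineq1; lra].
Qed.

Lemma ln_ratio_gt x : 0 < x < 1 -> 2 * x < ln (1 + x) - ln (1 - x).
Proof.
  intro Hx.
  set (phi := fun y => ln (1 + y) - ln (1 - y) - 2 * y).
  set (dphi := fun y => / (1 + y) + / (1 - y) - 2).
  destruct (MVT_cor2 phi dphi 0 x) as [c [Hphi Hc]]; [lra | |].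
  - intros c Hc. apply is_derive_Reals. unfold phi, dphi.
    auto_derive; [repeat split; lra | field; lra].
  - unfold phi in Hphi. rewrite Rplus_0_r, Rminus_0_r, ln_1 in Hphi.
    assert (dphi c > 0).
    { unfold dphi.
      replace (/ (1 + c) + / (1 - c) - 2) with (2 * c * c / ((1 + c) * (1 - c)))
        by (field; lra).
      apply Rdiv_lt_0_compat; nra. }
    nra.
Qed.

Lemma Un_cv_ln_shift c : 0 < c -> Un_cv (fun n => ln (INR n + c) - ln (INR n)) 0.
Proof.
  intros Hc eps Heps.
  destruct (archimed_cor1 (eps / c)) as [M [HM HM0]]; [apply Rdiv_lt_0_compat; lra |].
  exists M. intros n Hn. unfold Rdist. rewrite Rminus_0_r.
  assert (HM1 : 0 < INR M) by (apply lt_0_INR; lia).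
  assert (HMn : INR M <= INR n) by (apply le_INR; lia).
  assert (Hcn : 0 < c / INR n) by (apply Rdiv_lt_0_compat; lra).
  replace (ln (INR n + c) - ln (INR n)) with (ln (1 + c / INR n)).
  2: { rewrite <- ln_div by lra. f_equal. field. lra. }
  assert (Hpos : 0 < ln (1 + c / INR n)) by (rewrite <- ln_1; apply ln_increasing; lra).
  rewrite Rabs_right by lra.
  apply Rle_lt_trans with (c / INR n); [now apply ln_1p_le |].
  apply Rle_lt_trans with (c / INR M).
  - apply Rmult_le_compat_l; [lra | apply Rinv_le_contravar; lra].
  - apply (Rmult_lt_reg_r (/ c)); [apply Rinv_0_lt_compat; lra |].
    replace (c / INR M * / c) with (/ INR M) by (field; lra). exact HM.
Qed.

Section HarmonicBounds.
Variable gamma : R.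
Hypothesis harm_ln_cv : Un_cv (fun n => harm n - ln (INR n)) gamma.

Lemma harm_ln_shift_cv c : 0 < c -> Un_cv (fun n => harm n - ln (INR n + c)) gamma.
Proof.
  intro Hc. rewrite <- (Rminus_0_r gamma).
  apply (Un_cv_ext (fun n => (harm n - ln (INR n)) - (ln (INR n + c) - ln (INR n)))).
  - intro n. ring.
  - exact (CV_minus _ _ _ _ harm_ln_cv (Un_cv_ln_shift c Hc)).
Qed.

Lemma harm_sub_gamma_le j : harm j - gamma <= ln (INR j + 1).
Proof.
  set (v := fun n => harm n - ln (INR n + 1)).
  assert (Hv : Un_growing v).
  { intro n. unfold v. rewrite harm_S, S_INR.
    assert (0 <= INR n) by apply pos_INR.
    replace (ln (INR n + 1 + 1)) with (ln (INR n + 1) + ln (1 + / (INR n + 1))).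
    2: { assert (0 < / (INR n + 1)) by (apply Rinv_0_lt_compat; lra).
         rewrite <- ln_mult by lra. f_equal. field. lra. }
    pose proof (ln_1p_le (/ (INR n + 1)) ltac:(apply Rinv_0_lt_compat; lra)). lra. }
  pose proof (growing_ineq v gamma Hv (harm_ln_shift_cv 1 Rlt_0_1) j).
  unfold v in *. lra.
Qed.

Lemma ln_lt_harm_sub_gamma j : ln (INR j + / 2) < harm j - gamma.
Proof.
  set (v := fun n => harm n - ln (INR n + / 2)).
  assert (Hv : forall n, v (S n) < v n).
  { intro n. unfold v. rewrite harm_S, S_INR.
    assert (0 <= INR n) by apply pos_INR.
    set (x := / (2 * (INR n + 1))).
    assert (Hx : 0 < x < 1).
    { unfold x. split; [apply Rinv_0_lt_compat; lra |].
      rewrite <- Rinv_1. apply Rinv_lt_contravar; lra. }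
    (* [(1 + x) / (1 - x)] is the ratio [(n + 3/2) / (n + 1/2)] *)
    replace (ln (INR n + 1 + / 2)) with (ln (INR n + / 2) + (ln (1 + x) - ln (1 - x))).
    2: { rewrite <- ln_div, <- ln_mult by (try apply Rdiv_lt_0_compat; lra).
         f_equal. unfold x. field. lra. }
    pose proof (ln_ratio_gt x Hx).
    replace (2 * x) with (/ (INR n + 1)) in * by (unfold x; field; lra). lra. }
  assert (Hdec : Un_decreasing v) by (intro n; left; apply Hv).
  pose proof (decreasing_ineq v gamma Hdec (harm_ln_shift_cv (/ 2) ltac:(lra)) (S j)).
  pose proof (Hv j). unfold v in *. lra.
Qed.

End HarmonicBounds.

Section HalfLineCalculus.
Variables (f df : R -> R) (lo : R).
Hypothesis f_deriv : forall x, lo <= x -> derivable_pt_lim f x (df x).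

Lemma MVT_half_line x y : lo <= x -> lo <= y ->
  exists c, lo <= c /\ Rmin x y <= c <= Rmax x y /\ f y - f x = df c * (y - x).
Proof.
  intros Hx Hy. destruct (Rtotal_order x y) as [Hxy | [<- | Hxy]].
  - destruct (MVT_cor2 f df x y Hxy) as [c [Hf Hc]]; [intros c Hc; apply f_deriv; lra |].
    exists c. rewrite Rmin_left, Rmax_right by lra. repeat split; lra.
  - exists x. rewrite Rmin_left, Rmax_left by lra. repeat split; lra.
  - destruct (MVT_cor2 f df y x Hxy) as [c [Hf Hc]]; [intros c Hc; apply f_deriv; lra |].
    exists c. rewrite Rmin_right, Rmax_left by lra. repeat split; lra.
Qed.

Lemma antitone_of_deriv_nonpos :
  (forall x, lo <= x -> df x <= 0) -> forall x y, lo <= x -> x <= y -> f y <= f x.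
Proof.
  intros Hdf x y Hx Hxy.
  destruct (MVT_half_line x y Hx ltac:(lra)) as [c [Hc [_ Hf]]].
  pose proof (Hdf c Hc). nra.
Qed.

Lemma monotone_of_deriv_nonneg :
  (forall x, lo <= x -> 0 <= df x) -> forall x y, lo <= x -> x <= y -> f x <= f y.
Proof.
  intros Hdf x y Hx Hxy.
  destruct (MVT_half_line x y Hx ltac:(lra)) as [c [Hc [_ Hf]]].
  pose proof (Hdf c Hc). nra.
Qed.

Hypothesis df_monotone : forall x y, lo <= x -> x <= y -> df x <= df y.

Lemma tangent_le_convex x y : lo <= x -> lo <= y -> f x + df x * (y - x) <= f y.
Proof.
  intros Hx Hy. destruct (MVT_half_line x y Hx Hy) as [c [Hc [Hcxy Hf]]].
  destruct (Rle_lt_dec x y) as [Hxy | Hxy].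
  - rewrite Rmin_left, Rmax_right in Hcxy by lra.
    pose proof (df_monotone x c Hx ltac:(lra)). nra.
  - rewrite Rmin_right, Rmax_left in Hcxy by lra.
    pose proof (df_monotone c x Hc ltac:(lra)). nra.
Qed.

Lemma continuous_half_line x : lo <= x -> continuous f x.
Proof.
  intro Hx. apply continuity_pt_filterlim, derivable_continuous_pt.
  exists (df x). now apply f_deriv.
Qed.

Lemma ex_RInt_half_line a b : lo <= a -> lo <= b -> ex_RInt f a b.
Proof.
  intros Ha Hb. apply (ex_RInt_continuous (V := R_CompleteNormedModule)).
  intros x Hx. apply continuous_half_line.
  assert (lo <= Rmin a b) by (now apply Rmin_glb). lra.
Qed.

Lemma RInt_ge_midpoint a b : lo <= a <= b -> (b - a) * f ((a + b) / 2) <= RInt f a b.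
Proof.
  intros Hab. set (m := (a + b) / 2).
  set (G := fun x => f m * x + df m * ((x - m) ^ 2 / 2)).
  assert (HT : is_RInt (fun x => f m + df m * (x - m)) a b (minus (G b) (G a))).
  { apply (is_RInt_derive (V := R_CompleteNormedModule)).
    - intros x _. unfold G. auto_derive; [easy | simpl; field].
    - intros x _. apply continuity_pt_filterlim, derivable_continuous_pt.
      eexists. apply is_derive_Reals. auto_derive; [easy | reflexivity]. }
  apply (is_RInt_unique (V := R_CompleteNormedModule)) in HT.
  replace ((b - a) * f m) with (RInt (fun x => f m + df m * (x - m)) a b)
    by (rewrite HT; change (G b - G a = (b - a) * f m); unfold G, m; field).
  apply RInt_le; [lra | | now apply ex_RInt_half_line; lra |].
  - apply (ex_RInt_continuous (V := R_CompleteNormedModule)). intros x _.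
    apply continuity_pt_filterlim, derivable_continuous_pt.
    eexists. apply is_derive_Reals. auto_derive; [easy | reflexivity].
  - intros x Hx. apply tangent_le_convex; unfold m; lra.
Qed.

End HalfLineCalculus.

Lemma derivable_pt_lim_of_quadratic_remainder (f : R -> R) t l C delta : 0 < delta ->
  (forall h, h <> 0 -> Rabs h < delta -> Rabs (f (t + h) - f t - h * l) <= C * h ^ 2) ->
  derivable_pt_lim f t l.
Proof.
  intros Hdelta Hrem eps Heps.
  set (C' := Rabs C + 1).
  assert (HC' : 0 < C') by (unfold C'; pose proof (Rabs_pos C); lra).
  assert (Hq : 0 < eps / C') by (apply Rdiv_lt_0_compat; lra).
  exists (mkposreal _ (Rmin_pos _ _ Hdelta Hq)). intros h Hh0 Hh. simpl in Hh.
  assert (Hh1 : Rabs h < delta) by (eapply Rlt_le_trans; [exact Hh | apply Rmin_l]).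
  assert (Hh2 : Rabs h < eps / C') by (eapply Rlt_le_trans; [exact Hh | apply Rmin_r]).
  assert (Hah : 0 < Rabs h) by now apply Rabs_pos_lt.
  replace ((f (t + h) - f t) / h - l) with ((f (t + h) - f t - h * l) / h) by (field; lra).
  unfold Rdiv. rewrite Rabs_mult, Rabs_inv.
  apply (Rmult_lt_reg_r (Rabs h)); [exact Hah |].
  rewrite Rmult_assoc, Rinv_l, Rmult_1_r by lra.
  apply Rle_lt_trans with (C * h ^ 2); [now apply Hrem |].
  replace (h ^ 2) with (Rabs h * Rabs h) by (rewrite <- Rabs_mult, Rabs_right; [ring | nra]).
  assert (C * (Rabs h * Rabs h) <= C' * Rabs h * Rabs h).
  { pose proof (Rle_abs C). assert (0 <= Rabs h * Rabs h) by nra. unfold C'. nra. }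
  assert (C' * Rabs h < eps) by (apply (Rmult_lt_reg_r (/ C')); [apply Rinv_0_lt_compat; lra |];
    replace (C' * Rabs h * / C') with (Rabs h) by (field; lra); exact Hh2).
  nra.
Qed.

Definition recip_pow (k : nat) (s : R) : R := / s ^ S k.

Lemma recip_pow_pos k s : 0 < s -> 0 < recip_pow k s.
Proof. intro Hs. apply Rinv_0_lt_compat, pow_lt, Hs. Qed.

Lemma recip_pow_deriv k s : 0 < s ->
  derivable_pt_lim (recip_pow k) s (- INR (S k) * recip_pow (S k) s).
Proof.
  intro Hs. apply is_derive_Reals. unfold recip_pow.
  assert (s ^ k <> 0) by (apply pow_nonzero; lra).
  auto_derive; [apply (pow_nonzero s (S k)); lra |].
  change (match k with 0%nat => 1 | S _ => INR k + 1 end) with (INR (S k)).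
  rewrite <- !tech_pow_Rmult. field. split; assumption || lra.
Qed.

Lemma recip_pow_decreasing k s1 s2 : 0 < s1 -> s1 < s2 -> recip_pow k s2 < recip_pow k s1.
Proof.
  intros Hs1 Hs12. unfold recip_pow. simpl.
  pose proof (pow_lt s1 k Hs1). pose proof (pow_incr s1 s2 k ltac:(lra)).
  assert (Hlt : s1 * s1 ^ k < s2 * s2 ^ k) by nra.
  apply Rinv_lt_contravar; [apply Rmult_lt_0_compat |]; nra.
Qed.

Lemma recip_pow_antitone k s1 s2 : 0 < s1 -> s1 <= s2 -> recip_pow k s2 <= recip_pow k s1.
Proof.
  intros Hs1 [Hs12 | <-]; [now left; apply recip_pow_decreasing | lra].
Qed.

Lemma recip_pow_le_inv k s : 1 <= s -> recip_pow k s <= / s.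
Proof.
  intro Hs. unfold recip_pow. apply Rinv_le_contravar; [lra |].
  simpl. pose proof (pow_R1_Rle s k Hs). nra.
Qed.

Lemma Defs_RInt_eq f a b : ex_RInt f a b -> Defs.RInt f a b = RInt f a b.
Proof.
  intro Hf. unfold Defs.RInt.
  destruct (excluded_middle_informative _) as [Hint | Hnint].
  - symmetry. apply RInt_Reals.
  - exfalso. apply Hnint. constructor. now apply ex_RInt_Reals_0.
Qed.

Lemma RInt_sub_add_scal (f g h : R -> R) c a b :
  ex_RInt f a b -> ex_RInt g a b -> ex_RInt h a b ->
  RInt (fun x => f x - g x + c * h x) a b = RInt f a b - RInt g a b + c * RInt h a b.
Proof.
  intros Hf Hg Hh.
  rewrite (RInt_plus (V := R_CompleteNormedModule) (fun x => f x - g x) (fun x => c * h x));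
    [| now apply (ex_RInt_minus (V := R_CompleteNormedModule))
     | now apply (ex_RInt_scal (V := R_CompleteNormedModule))].
  rewrite (RInt_minus (V := R_CompleteNormedModule)) by assumption.
  rewrite (RInt_scal (V := R_CompleteNormedModule)) by assumption.
  reflexivity.
Qed.

Lemma RInt_const_unit (c x : R) : RInt (fun _ => c) x (x + 1) = c.
Proof. rewrite RInt_const. change ((x + 1 - x) * c = c). ring. Qed.

Section IntegralSumGap.
Variables (N : nat) (rho : R -> R) (a : nat -> R).
Hypothesis N_pos : (1 <= N)%nat.
Hypothesis a_between : forall j, (N <= j)%nat -> ln (INR j) <= a j <= ln (INR j + 1).
Hypothesis rho_cont : forall c, ln (INR N) <= c -> continuity_pt rho c.
Hypothesis rho_antitone : forall c1 c2, ln (INR N) <= c1 -> c1 <= c2 -> rho c2 <= rho c1.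

Definition integral_sum_gap n :=
  RInt (fun x => rho (ln x)) (INR N) (INR n) - ssum (fun j => rho (a j)) N n.

Lemma INR_N_pos : 0 < INR N.
Proof. apply lt_0_INR. lia. Qed.

Lemma ln_INR_N_le x : INR N <= x -> ln (INR N) <= ln x.
Proof. intro Hx. pose proof INR_N_pos. apply ln_le; lra. Qed.

Lemma ex_RInt_rho_ln x y : INR N <= x -> INR N <= y -> ex_RInt (fun z => rho (ln z)) x y.
Proof.
  intros Hx Hy. apply (ex_RInt_continuous (V := R_CompleteNormedModule)).
  intros z Hz. assert (HNz : INR N <= z) by (pose proof (Rmin_glb _ _ _ Hx Hy); lra).
  pose proof INR_N_pos.
  apply continuity_pt_filterlim.
  apply (continuity_pt_comp ln rho); [| now apply rho_cont, ln_INR_N_le].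
  apply derivable_continuous_pt. exists (/ z). apply derivable_pt_lim_ln. lra.
Qed.

Lemma integral_sum_gap_N : integral_sum_gap N = 0.
Proof. unfold integral_sum_gap. rewrite RInt_point, ssum_nil. apply Rminus_diag. Qed.

Lemma integral_sum_gap_S j : (N <= j)%nat ->
  integral_sum_gap (S j) - integral_sum_gap j
  = RInt (fun x => rho (ln x)) (INR j) (INR j + 1) - rho (a j).
Proof.
  intro Hj. unfold integral_sum_gap. rewrite ssum_S by exact Hj.
  assert (HNj : INR N <= INR j) by now apply le_INR.
  rewrite <- (RInt_Chasles _ (INR N) (INR j) (INR (S j)))
    by (apply ex_RInt_rho_ln; rewrite ?S_INR; lra).
  rewrite S_INR. change (plus ?u ?v) with (u + v). ring.
Qed.

Lemma integral_sum_gap_step_le j : (N <= j)%nat ->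
  Rabs (integral_sum_gap (S j) - integral_sum_gap j) <= rho (ln (INR j)) - rho (ln (INR j + 1)).
Proof.
  intro Hj. rewrite integral_sum_gap_S by exact Hj.
  pose proof INR_N_pos. assert (HNj : INR N <= INR j) by now apply le_INR.
  assert (Hex : ex_RInt (fun x => rho (ln x)) (INR j) (INR j + 1)) by (apply ex_RInt_rho_ln; lra).
  assert (Hlo : rho (ln (INR j + 1)) <= RInt (fun x => rho (ln x)) (INR j) (INR j + 1)).
  { rewrite <- (RInt_const_unit (rho (ln (INR j + 1))) (INR j)).
    apply RInt_le; [lra | apply ex_RInt_const | exact Hex |].
    intros x Hx. apply rho_antitone; [apply ln_INR_N_le | apply ln_le]; lra. }
  assert (Hhi : RInt (fun x => rho (ln x)) (INR j) (INR j + 1) <= rho (ln (INR j))).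
  { rewrite <- (RInt_const_unit (rho (ln (INR j))) (INR j)).
    apply RInt_le; [lra | exact Hex | apply ex_RInt_const |].
    intros x Hx. apply rho_antitone; [apply ln_INR_N_le | apply ln_le]; lra. }
  destruct (a_between j Hj) as [Ha1 Ha2].
  pose proof (ln_INR_N_le (INR j) HNj).
  assert (rho (ln (INR j + 1)) <= rho (a j) <= rho (ln (INR j))).
  { split; apply rho_antitone; lra. }
  apply Rabs_le. lra.
Qed.

Lemma integral_sum_gap_diff_le n m : (N <= n)%nat -> (n <= m)%nat ->
  Rabs (integral_sum_gap m - integral_sum_gap n) <= rho (ln (INR n)) - rho (ln (INR m)).
Proof.
  intros Hn Hnm. induction Hnm as [| m Hnm IH].
  - rewrite !Rminus_diag, Rabs_R0. lra.
  - pose proof (integral_sum_gap_step_le m ltac:(lia)) as Hstep. rewrite <- S_INR in Hstep.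
    replace (integral_sum_gap (S m) - integral_sum_gap n)
      with ((integral_sum_gap (S m) - integral_sum_gap m)
            + (integral_sum_gap m - integral_sum_gap n))
      by ring.
    eapply Rle_trans; [apply Rabs_triang | lra].
Qed.

End IntegralSumGap.

Section TaylorRemainder.
Variables (f df d2f : R -> R) (lo h : R).
Hypothesis f_deriv : forall s, lo <= s -> derivable_pt_lim f s (df s).
Hypothesis df_deriv : forall s, lo <= s -> derivable_pt_lim df s (d2f s).
Hypothesis d2f_nonneg : forall s, lo <= s -> 0 <= d2f s.
Hypothesis d2f_antitone : forall s1 s2, lo <= s1 -> s1 <= s2 -> d2f s2 <= d2f s1.

Definition taylor_rem s := f (s + h) - f s - h * df s.

Lemma taylor_rem_bounds s : lo <= s -> lo <= s + h -> 0 <= taylor_rem s <= d2f lo * h ^ 2.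
Proof.
  intros Hs Hsh.
  pose proof (monotone_of_deriv_nonneg df d2f lo df_deriv d2f_nonneg) as df_monotone.
  pose proof (tangent_le_convex f df lo f_deriv df_monotone s (s + h) Hs Hsh) as Htan1.
  pose proof (tangent_le_convex f df lo f_deriv df_monotone (s + h) s Hsh Hs) as Htan2.
  destruct (MVT_half_line df d2f lo df_deriv s (s + h) Hs Hsh) as [c [Hc [_ Hmvt]]].
  pose proof (d2f_nonneg c Hc). pose proof (d2f_antitone lo c (Rle_refl lo) Hc).
  unfold taylor_rem. replace (s + h - s) with h in * by ring.
  split; [nra |].
  assert (Hrem : f (s + h) - f s - h * df s <= h * (df (s + h) - df s)) by nra.
  rewrite Hmvt in Hrem. nra.
Qed.

Lemma taylor_rem_deriv s : lo <= s -> lo <= s + h ->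
  derivable_pt_lim taylor_rem s (df (s + h) - df s - h * d2f s).
Proof.
  intros Hs Hsh.
  assert (Hshift : derivable_pt_lim (fun x => x + h) s 1)
    by (apply is_derive_Reals; auto_derive; [easy | ring]).
  pose proof (derivable_pt_lim_comp _ f s _ _ Hshift (f_deriv _ Hsh)) as Hfh.
  pose proof (derivable_pt_lim_minus _ _ _ _ _ (derivable_pt_lim_minus _ _ _ _ _ Hfh (f_deriv s Hs))
    (derivable_pt_lim_scal _ h _ _ (df_deriv s Hs))) as Hrem.
  replace (df (s + h) - df s - h * d2f s) with (df (s + h) * 1 - df s - h * d2f s) by ring.
  exact Hrem.
Qed.

Lemma taylor_rem_antitone s1 s2 : lo <= s1 -> lo <= s1 + h -> s1 <= s2 ->
  taylor_rem s2 <= taylor_rem s1.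
Proof.
  intros Hs1 Hs1h Hs12.
  assert (Hdom : forall s, Rmax lo (lo - h) <= s -> lo <= s /\ lo <= s + h).
  { intros s Hs. pose proof (Rmax_l lo (lo - h)). pose proof (Rmax_r lo (lo - h)). lra. }
  apply (antitone_of_deriv_nonpos taylor_rem (fun s => df (s + h) - df s - h * d2f s)
    (Rmax lo (lo - h))).
  - intros s Hs. destruct (Hdom s Hs). now apply taylor_rem_deriv.
  - (* concavity of [df]: it lies below its tangent at [s] *)
    intros s Hs. destruct (Hdom s Hs) as [Hlo Hloh].
    assert (Hopp : forall x, lo <= x -> derivable_pt_lim (fun x => - df x) x (- d2f x))
      by (intros x Hx; exact (derivable_pt_lim_opp _ _ _ (df_deriv x Hx))).
    assert (Hmono : forall x y, lo <= x -> x <= y -> - d2f x <= - d2f y)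
      by (intros x y Hx Hxy; pose proof (d2f_antitone x y Hx Hxy); lra).
    pose proof (tangent_le_convex _ _ lo Hopp Hmono s (s + h) Hlo Hloh). nra.
  - now apply Rmax_lub; lra.
  - exact Hs12.
Qed.

End TaylorRemainder.

Lemma Un_cv_ge_eventually (u : nat -> R) l c M :
  Un_cv u l -> (forall n, (M <= n)%nat -> c <= u n) -> c <= l.
Proof.
  intros Hu Hc. destruct (Rle_lt_dec c l) as [Hcl | Hlc]; [exact Hcl |].
  destruct (Hu (c - l)) as [M1 HM1]; [lra |].
  specialize (HM1 (max M M1) ltac:(lia)). specialize (Hc (max M M1) ltac:(lia)).
  unfold Rdist in HM1. apply Rabs_def2 in HM1. lra.
Qed.

Lemma Un_cv_abs_le_eventually (u : nat -> R) l c M :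
  Un_cv u l -> (forall n, (M <= n)%nat -> Rabs (u n) <= c) -> Rabs l <= c.
Proof.
  intros Hu Hc. apply Rabs_le. split.
  - apply (Un_cv_ge_eventually u l (- c) M Hu).
    intros n Hn. pose proof (Rabs_le_between (u n) c) as [Hb _]. now apply Hb, Hc.
  - assert (Hopp : - c <= - l).
    { apply (Un_cv_ge_eventually (opp_seq u) (- l) (- c) M (CV_opp u l Hu)).
      intros n Hn. unfold opp_seq. pose proof (Rabs_le_between (u n) c) as [Hb _].
      specialize (Hb (Hc n Hn)). lra. }
    lra.
Qed.

Lemma recip_pow_ln_vanishes k t eps : 0 < eps ->
  exists M, forall n, (M <= n)%nat -> 0 < t + ln (INR n) /\ recip_pow k (t + ln (INR n)) < eps.
Proof.
  intro Heps. set (B := Rmax 1 (/ eps)).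
  pose proof (Rmax_l 1 (/ eps)) as HB1. pose proof (Rmax_r 1 (/ eps)) as HB2. fold B in HB1, HB2.
  destruct (archimed_cor1 (/ exp (B - t))) as [M [HM HM0]];
    [apply Rinv_0_lt_compat, exp_pos |].
  exists M. intros n Hn.
  assert (HMn : INR M <= INR n) by (apply le_INR; lia).
  assert (HM1 : 0 < INR M) by (apply lt_0_INR; lia).
  assert (Hexp : exp (B - t) < INR M).
  { rewrite <- (Rinv_inv (INR M)), <- (Rinv_inv (exp (B - t))).
    apply Rinv_lt_contravar; [| exact HM].
    apply Rmult_lt_0_compat; apply Rinv_0_lt_compat; [lra | apply exp_pos]. }
  assert (Hln : B - t < ln (INR n)).
  { rewrite <- (ln_exp (B - t)). apply ln_increasing; [apply exp_pos | lra]. }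
  split; [lra |].
  apply Rle_lt_trans with (/ (t + ln (INR n))); [apply recip_pow_le_inv; lra |].
  rewrite <- (Rinv_inv eps). apply Rinv_lt_contravar; [| lra].
  apply Rmult_lt_0_compat; [apply Rinv_0_lt_compat |]; lra.
Qed.

Lemma continuity_pt_shift (g : R -> R) s c :
  continuity_pt g (s + c) -> continuity_pt (fun c => g (s + c)) c.
Proof.
  intro Hg. apply (continuity_pt_comp (fun c => s + c) g); [| exact Hg].
  apply derivable_continuous_pt. exists 1. apply is_derive_Reals. auto_derive; [easy | ring].
Qed.

Lemma recip_pow_cont k s : 0 < s -> continuity_pt (recip_pow k) s.
Proof.
  intro Hs. apply derivable_continuous_pt. eexists. now apply recip_pow_deriv.
Qed.

Lemma recip_pow_ln_deriv k t x : 0 < x -> 0 < t + ln x ->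
  derivable_pt_lim (fun x => recip_pow k (t + ln x)) x
    (- INR (S k) * recip_pow (S k) (t + ln x) * / x).
Proof.
  intros Hx Htx.
  assert (Hin : derivable_pt_lim (fun x => t + ln x) x (/ x))
    by (apply is_derive_Reals; auto_derive; [easy | ring]).
  exact (derivable_pt_lim_comp _ (recip_pow k) x _ _ Hin (recip_pow_deriv k _ Htx)).
Qed.

Lemma recip_pow_ln_deriv_monotone k t x y : 0 < x -> 0 < t + ln x -> x <= y ->
  - INR (S k) * recip_pow (S k) (t + ln x) * / x <= - INR (S k) * recip_pow (S k) (t + ln y) * / y.
Proof.
  intros Hx Htx Hxy.
  assert (Hln : t + ln x <= t + ln y) by (pose proof (ln_le x y Hx Hxy); lra).
  pose proof (recip_pow_antitone (S k) _ _ Htx Hln).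
  assert (0 < recip_pow (S k) (t + ln y)) by (apply recip_pow_pos; lra).
  pose proof (Rinv_le_contravar x y Hx Hxy). pose proof (Rinv_0_lt_compat y ltac:(lra)).
  assert (0 < INR (S k)) by (apply lt_0_INR; lia).
  assert (recip_pow (S k) (t + ln y) * / y <= recip_pow (S k) (t + ln x) * / x)
    by (apply Rmult_le_compat; lra).
  nra.
Qed.

Section ThetaSequence.
Variables (gamma : R) (N : nat).
Hypothesis harm_ln_cv : Un_cv (fun n => harm n - ln (INR n)) gamma.
Hypothesis N_pos : (1 <= N)%nat.

Lemma harm_sub_gamma_between j : (N <= j)%nat ->
  ln (INR j) <= harm j - gamma <= ln (INR j + 1).
Proof.
  intro Hj. assert (0 < INR j) by (apply lt_0_INR; lia).
  pose proof (ln_lt_harm_sub_gamma gamma harm_ln_cv j).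
  pose proof (harm_sub_gamma_le gamma harm_ln_cv j).
  assert (ln (INR j) <= ln (INR j + / 2)) by (apply ln_le; lra).
  lra.
Qed.

Section FixedShift.
Variables (k : nat) (s : R).
Hypothesis s_dom : 0 < s + ln (INR N).

Let rho := fun c => recip_pow k (s + c).
Let a := fun j => harm j - gamma.

Lemma theta_integrand_cont c : ln (INR N) <= c -> continuity_pt rho c.
Proof. intro Hc. apply continuity_pt_shift, recip_pow_cont. lra. Qed.

Lemma theta_integrand_antitone c1 c2 : ln (INR N) <= c1 -> c1 <= c2 -> rho c2 <= rho c1.
Proof. intros Hc1 Hc12. apply recip_pow_antitone; lra. Qed.

Lemma theta_term_gap n : (N <= n)%nat -> theta_term gamma k s N n = integral_sum_gap N rho a n.
Proof.
  intro Hn. assert (HNn : INR N <= INR n) by now apply le_INR.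
  unfold theta_term, integral_sum_gap.
  rewrite Defs_RInt_eq by (apply (ex_RInt_rho_ln N rho N_pos theta_integrand_cont); lra).
  do 2 f_equal. apply functional_extensionality. intro j.
  unfold rho, a, recip_pow. now rewrite Rplus_comm.
Qed.

Lemma theta_term_cauchy : Cauchy_crit (fun n => theta_term gamma k s N n).
Proof.
  intros eps Heps. destruct (recip_pow_ln_vanishes k s eps Heps) as [M HM].
  assert (Hdiff : forall n m, (max M N <= n)%nat -> (n <= m)%nat ->
            Rabs (theta_term gamma k s N m - theta_term gamma k s N n) < eps).
  { intros n m Hn Hnm. rewrite !theta_term_gap by lia.
    eapply Rle_lt_trans.
    { apply (integral_sum_gap_diff_le N rho a N_pos harm_sub_gamma_between
               theta_integrand_cont theta_integrand_antitone);
        lia. }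
    destruct (HM n ltac:(lia)) as [_ Hsmall]. destruct (HM m ltac:(lia)) as [Hpos _].
    pose proof (recip_pow_pos k _ Hpos). unfold rho. lra. }
  exists (max M N). intros n m Hn Hm. unfold Rdist.
  destruct (Nat.le_ge_cases n m).
  - rewrite Rabs_minus_sym. apply Hdiff; lia.
  - apply Hdiff; lia.
Qed.

Lemma theta_term_S_gt n : (N <= n)%nat ->
  theta_term gamma k s N n < theta_term gamma k s N (S n).
Proof.
  intro Hn. apply Rminus_gt_0_lt. rewrite !theta_term_gap by lia.
  rewrite (integral_sum_gap_S N rho a N_pos theta_integrand_cont n Hn).
  pose proof (ln_INR_N_le N N_pos) as HlnN.
  assert (HNn : INR N <= INR n) by now apply le_INR.
  assert (Hmid : (INR n + 1 - INR n) * recip_pow k (s + ln ((INR n + (INR n + 1)) / 2))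
                 <= RInt (fun x => rho (ln x)) (INR n) (INR n + 1)).
  { apply (RInt_ge_midpoint (fun x => rho (ln x))
      (fun x => - INR (S k) * recip_pow (S k) (s + ln x) * / x) (INR N)).
    - intros x Hx. pose proof (HlnN x Hx). pose proof (INR_N_pos N N_pos).
      apply recip_pow_ln_deriv; lra.
    - intros x y Hx Hxy. pose proof (HlnN x Hx). pose proof (INR_N_pos N N_pos).
      apply recip_pow_ln_deriv_monotone; lra.
    - lra. }
  replace ((INR n + (INR n + 1)) / 2) with (INR n + / 2) in Hmid by field.
  replace (INR n + 1 - INR n) with 1 in Hmid by ring.
  assert (Hgap : rho (a n) < recip_pow k (s + ln (INR n + / 2))).
  { pose proof (ln_lt_harm_sub_gamma gamma harm_ln_cv n).
    assert (ln (INR N) <= ln (INR n + / 2)) by (apply HlnN; lra).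
    apply recip_pow_decreasing; unfold a; lra. }
  lra.
Qed.

Lemma theta_term_lim_pos l : Un_cv (fun n => theta_term gamma k s N n) l -> 0 < l.
Proof.
  intro Hl.
  assert (Hfirst : 0 < theta_term gamma k s N (S N)).
  { pose proof (theta_term_S_gt N (Nat.le_refl N)) as Hgt.
    now rewrite (theta_term_gap N (Nat.le_refl N)), integral_sum_gap_N in Hgt. }
  assert (Hincr : forall n, (S N <= n)%nat ->
            theta_term gamma k s N (S N) <= theta_term gamma k s N n).
  { intros n Hn. induction Hn as [| n Hn IH]; [lra |].
    pose proof (theta_term_S_gt n ltac:(lia)). lra. }
  pose proof (Un_cv_ge_eventually _ l _ (S N) Hl Hincr). lra.
Qed.

End FixedShift.
End ThetaSequence.

Definition theta_lim (gamma : R) (N k : nat) (t : R) : R :=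
  epsilon (inhabits 0) (fun l => Un_cv (fun n => theta_term gamma k t N n) l).

Lemma theta_lim_cv gamma N k t :
  Un_cv (fun n => harm n - ln (INR n)) gamma -> (1 <= N)%nat -> - ln (INR N) < t ->
  Un_cv (fun n => theta_term gamma k t N n) (theta_lim gamma N k t).
Proof.
  intros Hg HN Ht. unfold theta_lim. apply epsilon_spec.
  destruct (Rcomplete.R_complete _ (theta_term_cauchy gamma N Hg HN k t ltac:(lra))) as [l Hl].
  now exists l.
Qed.

Lemma recip_pow_deriv2 k s : 0 < s ->
  derivable_pt_lim (fun s => - INR (S k) * recip_pow (S k) s) s
    (INR (S k) * INR (S (S k)) * recip_pow (S (S k)) s).
Proof.
  intro Hs.
  replace (INR (S k) * INR (S (S k)) * recip_pow (S (S k)) s)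
    with (- INR (S k) * (- INR (S (S k)) * recip_pow (S (S k)) s)) by ring.
  exact (derivable_pt_lim_scal _ _ _ _ (recip_pow_deriv (S k) s Hs)).
Qed.

Section ThetaDerivative.
Variables (gamma : R) (N k : nat) (t : R).
Hypothesis harm_ln_cv : Un_cv (fun n => harm n - ln (INR n)) gamma.
Hypothesis N_pos : (1 <= N)%nat.
Hypothesis t_dom : - ln (INR N) < t.

(* for [|h| < delta] and [x >= N], both [t + ln x] and [t + h + ln x] are at least [delta] *)
Let delta := (t + ln (INR N)) / 2.
Let df := fun s => - INR (S k) * recip_pow (S k) s.
Let d2f := fun s => INR (S k) * INR (S (S k)) * recip_pow (S (S k)) s.

Lemma delta_pos : 0 < delta.
Proof. unfold delta. lra. Qed.

Lemma recip_pow_deriv_delta s : delta <= s -> derivable_pt_lim (recip_pow k) s (df s).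
Proof. intro Hs. pose proof delta_pos. apply recip_pow_deriv. lra. Qed.

Lemma df_deriv_delta s : delta <= s -> derivable_pt_lim df s (d2f s).
Proof. intro Hs. pose proof delta_pos. apply recip_pow_deriv2. lra. Qed.

Lemma d2f_nonneg_delta s : delta <= s -> 0 <= d2f s.
Proof.
  intro Hs. pose proof delta_pos. unfold d2f.
  pose proof (recip_pow_pos (S (S k)) s ltac:(lra)).
  pose proof (pos_INR (S k)). pose proof (pos_INR (S (S k))).
  apply Rmult_le_pos; [apply Rmult_le_pos |]; lra.
Qed.

Lemma d2f_antitone_delta s1 s2 : delta <= s1 -> s1 <= s2 -> d2f s2 <= d2f s1.
Proof.
  intros Hs1 Hs12. pose proof delta_pos. unfold d2f.
  pose proof (recip_pow_antitone (S (S k)) s1 s2 ltac:(lra) Hs12).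
  pose proof (pos_INR (S k)). pose proof (pos_INR (S (S k))).
  apply Rmult_le_compat_l; [apply Rmult_le_pos |]; lra.
Qed.

Section Shift.
Variable h : R.
Hypothesis h_small : Rabs h < delta.

Let theta_rem := fun c => taylor_rem (recip_pow k) df h (t + c).

Lemma theta_rem_between c : ln (INR N) <= c -> 0 <= theta_rem c <= d2f delta * h ^ 2.
Proof.
  intro Hc. apply Rabs_def2 in h_small.
  apply (taylor_rem_bounds _ _ _ _ _ recip_pow_deriv_delta df_deriv_delta d2f_nonneg_delta
    d2f_antitone_delta); unfold delta in *; lra.
Qed.

Lemma theta_rem_cont c : ln (INR N) <= c -> continuity_pt theta_rem c.
Proof.
  intro Hc. apply Rabs_def2 in h_small. apply continuity_pt_shift, derivable_continuous_pt.
  eexists. apply (taylor_rem_deriv _ _ _ _ _ recip_pow_deriv_delta df_deriv_delta);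
    unfold delta in *; lra.
Qed.

Lemma theta_rem_antitone c1 c2 : ln (INR N) <= c1 -> c1 <= c2 -> theta_rem c2 <= theta_rem c1.
Proof.
  intros Hc1 Hc12. apply Rabs_def2 in h_small.
  apply (taylor_rem_antitone _ _ _ _ _ recip_pow_deriv_delta df_deriv_delta
    d2f_antitone_delta);
    unfold delta in *; lra.
Qed.

Lemma theta_term_taylor_gap n : (N <= n)%nat ->
  theta_term gamma k (t + h) N n - theta_term gamma k t N n
    + h * INR (S k) * theta_term gamma (S k) t N n
  = integral_sum_gap N theta_rem (fun j => harm j - gamma) n.
Proof.
  intro Hn. assert (HNn : INR N <= INR n) by now apply le_INR.
  apply Rabs_def2 in h_small.
  assert (Hex : forall m s, 0 < s + ln (INR N) ->
            ex_RInt (fun x => recip_pow m (s + ln x)) (INR N) (INR n)).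
  { intros m s Hs. apply (ex_RInt_rho_ln N (fun c => recip_pow m (s + c)) N_pos); [| lra | lra].
    intros c Hc. apply continuity_pt_shift, recip_pow_cont. lra. }
  assert (Hth : 0 < t + h + ln (INR N)) by (unfold delta in *; lra).
  assert (Ht : 0 < t + ln (INR N)) by lra.
  rewrite (theta_term_gap gamma N N_pos k (t + h) Hth n Hn).
  rewrite !(theta_term_gap gamma N N_pos _ t Ht n Hn).
  replace theta_rem with (fun c => recip_pow k (t + h + c) - recip_pow k (t + c)
                             + h * INR (S k) * recip_pow (S k) (t + c)).
  - unfold integral_sum_gap. cbv beta.
    rewrite RInt_sub_add_scal, ssum_sub_add_scal by (apply Hex; lra). ring.
  - apply functional_extensionality. intro c. unfold theta_rem, taylor_rem, df.
    replace (t + c + h) with (t + h + c) by ring. ring.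
Qed.

Lemma theta_lim_taylor_le :
  Rabs (theta_lim gamma N k (t + h) - theta_lim gamma N k t
        + h * INR (S k) * theta_lim gamma N (S k) t) <= d2f delta * h ^ 2.
Proof.
  assert (Hth : - ln (INR N) < t + h) by (apply Rabs_def2 in h_small; unfold delta in *; lra).
  apply (Un_cv_abs_le_eventually (fun n => theta_term gamma k (t + h) N n - theta_term gamma k t N n
           + h * INR (S k) * theta_term gamma (S k) t N n) _ _ N).
  - apply CV_plus; [apply CV_minus; now apply theta_lim_cv |].
    apply CV_mult; [apply is_lim_seq_Reals, is_lim_seq_const | now apply theta_lim_cv].
  - intros n Hn. rewrite theta_term_taylor_gap by exact Hn.
    assert (HNn : INR N <= INR n) by now apply le_INR.
    rewrite <- (Rminus_0_r (integral_sum_gap _ _ _ n)),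
      <- (integral_sum_gap_N N theta_rem (fun j => harm j - gamma)).
    eapply Rle_trans.
    { apply (integral_sum_gap_diff_le N theta_rem (fun j => harm j - gamma) N_pos
        (harm_sub_gamma_between gamma N harm_ln_cv N_pos)
        theta_rem_cont theta_rem_antitone N n (Nat.le_refl N) Hn). }
    pose proof (theta_rem_between (ln (INR N)) (Rle_refl _)).
    pose proof (theta_rem_between (ln (INR n)) (ln_INR_N_le N N_pos _ HNn)).
    lra.
Qed.

End Shift.

Lemma theta_lim_deriv :
  derivable_pt_lim (theta_lim gamma N k) t (- INR (S k) * theta_lim gamma N (S k) t).
Proof.
  apply (derivable_pt_lim_of_quadratic_remainder _ _ _ (d2f delta) delta delta_pos).
  intros h _ Hh.
  replace (theta_lim gamma N k (t + h) - theta_lim gamma N k t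
           - h * (- INR (S k) * theta_lim gamma N (S k) t))
    with (theta_lim gamma N k (t + h) - theta_lim gamma N k t
          + h * INR (S k) * theta_lim gamma N (S k) t) by ring.
  now apply theta_lim_taylor_le.
Qed.

End ThetaDerivative.

Theorem proposition3p8 :
  forall (N : nat), (1 <= N)%nat ->
  forall (gamma : R), Un_cv (fun n => harm n - ln (INR n)) gamma ->
  exists L : nat -> R -> R,
    (forall (k : nat) (t : R), - ln (INR N) < t ->
       Un_cv (fun n => theta_term gamma k t N n) (L k t)) /\
    exists D : nat -> R -> R,
      (forall t : R, - ln (INR N) < t -> D 0%nat t = L 0%nat t) /\
      (forall (k : nat) (t : R), - ln (INR N) < t ->
         derivable_pt_lim (D k) t (D (S k) t)) /\
      (forall (k : nat) (t : R), - ln (INR N) < t ->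
         (-1) ^ k * D k t = INR (fact k) * L k t /\
         INR (fact k) * L k t > 0).
Proof.
  intros N HN gamma Hg.
  exists (theta_lim gamma N). split; [intros k t Ht; now apply theta_lim_cv |].
  exists (fun k t => (-1) ^ k * INR (fact k) * theta_lim gamma N k t).
  split; [| split].
  - intros t Ht. simpl. ring.
  - intros k t Ht.
    replace ((-1) ^ S k * INR (fact (S k)) * theta_lim gamma N (S k) t)
      with ((-1) ^ k * INR (fact k) * (- INR (S k) * theta_lim gamma N (S k) t))
      by (rewrite fact_simpl, mult_INR; simpl; ring).
    exact (derivable_pt_lim_scal _ _ _ _ (theta_lim_deriv gamma N k t Hg HN Ht)).
  - intros k t Ht. split.
    + assert (Hsign : (-1) ^ k * (-1) ^ k = 1)
        by (rewrite <- Rpow_mult_distr, <- (pow1 k); f_equal; ring).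
      transitivity ((-1) ^ k * (-1) ^ k * (INR (fact k) * theta_lim gamma N k t)); [ring |].
      rewrite Hsign. ring.
    + apply Rmult_lt_0_compat; [apply lt_0_INR, lt_O_fact |].
      apply (theta_term_lim_pos gamma N Hg HN k t ltac:(lra)). now apply theta_lim_cv.
Qed.
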